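(* Let $\Gamma=(\Gamma_i)_{i\in\mathit{Agt}}$ be an agent vocabulary profile with each $\Gamma_i$ finite, let $\varphi_0\in\mathcal{L}^{\mathsf{dyn}}$ and let $S_0=((B_i)_i,V)$ be a state in $\mathbf{S}_\Gamma$. Then $(S_0,\mathbf{S}_\Gamma)\models\varphi_0$ iff the quantified Boolean formula $\exists X_s(\mathrm{desc}_{S_0}(X_s)\wedge tr_s(\varphi_0))$ is true.
   Context: Setting. $\mathit{Agt}=\{1,\dots,n\}$; $\mathit{Atm}$ countably infinite, containing special atoms $\mathsf{rew}_i,\mathsf{pun}_i$. $\mathcal{L}_0$: $\alpha::=p\mid\neg\alpha\mid\alpha\wedge\alpha\mid\triangle_i\alpha$. State $S=((B_i)_i,V)$, $B_i\subseteq\mathcal{L}_0$, $V\subseteq\mathit{Atm}$; $S\models p$ iff $p\in V$, Boolean as usual, $S\models\triangle_i\alpha$ iff $\alpha\in B_i$. $S\mathcal{E}_iS'$ iff $S'\models\alpha$ for all $\alpha\in B_i$; $S\mathcal{A}_iS'$ iff $S'\models\alpha$ for some $\alpha$ with $(\alpha\to\mathsf{rew}_i)\in B_i$; $S\mathcal{R}_iS'$ iff $S'\models\alpha$ for some $\alpha$ with $(\alpha\to\mathsf{pun}_i)\in B_i$. $\mathbf{S}_\Gamma$ is the set of states with $B_i\subseteq\Gamma_i$ for all $i$. Programs $\pi::=+_i\alpha\mid-_i\alpha\mid\pi;\pi\mid\pi\cup\pi\mid?\varphi$; $\mathcal{L}^{\mathsf{dyn}}$: $\varphi::=\alpha\mid\neg\varphi\mid\varphi\wedge\varphi\mid\Box_i\varphi\mid\mathcal{A}_i\varphi\mid\mathcal{R}_i\varphi\mid\mathcal{A}^{\mathsf{real}}_i\varphi\mid\mathcal{R}^{\mathsf{real}}_i\varphi\mid[\pi]\varphi$.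 For $S\in U$: $(S,U)\models\alpha$ iff $S\models\alpha$; $(S,U)\models\Box_i\varphi$ iff all $S'\in U$ with $S\mathcal{E}_iS'$ satisfy $\varphi$; $(S,U)\models\mathcal{A}_i\varphi$ (resp. $\mathcal{R}_i\varphi$) iff every $S'\in U$ satisfying $\varphi$ has $S\mathcal{A}_iS'$ (resp. $S\mathcal{R}_iS'$); $(S,U)\models\mathcal{A}^{\mathsf{real}}_i\varphi$ (resp. $\mathcal{R}^{\mathsf{real}}_i\varphi$) iff every $S'\in U$ satisfying $\varphi$ with $S\mathcal{E}_iS'$ has $S\mathcal{A}_iS'$ (resp. $S\mathcal{R}_iS'$); $(S,U)\models[\pi]\varphi$ iff every $S'\in U$ with $S\to^U_\pi S'$ satisfies $\varphi$, where $S\to^U_{+_i\alpha}S'$ iff $V'=V$, $B'_i=B_i\cup\{\alpha\}$, $B'_j=B_j$ ($j\ne i$); $S\to^U_{-_i\alpha}S'$ likewise with $B'_i=B_i\setminus\{\alpha\}$; $;$ is composition through some $S''\in U$; $\cup$ is union; $S\to^U_{?\varphi}S'$ iff $S'=S$ and $(S,U)\models\varphi$. Translation. For abstract symbols $s$ and $\beta\in\mathcal{L}_0$ there are QBF variables $x_{\beta,s}$. $X_s$ is the set of variables $x_{\triangle_i\alpha,s}$, $x_{\triangle_i(\alpha\to\mathsf{rew}_i),s}$, $x_{\triangle_i(\alpha\to\mathsf{pun}_i),s}$ for $i\in\mathit{Agt}$, $\alpha\in\Gamma_i$, and $x_{p,s}$ for atoms $p$ occurring in $\Gamma$ or $\varphi_0$;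 $\forall X_s$/$\exists X_s$ quantify all of them. Macros: $\mathrm{eq}_{\mathrm{prop}}(s,s'):=\bigwedge_p(x_{p,s}\leftrightarrow x_{p,s'})$; $\mathrm{eq}_j(s,s'):=\bigwedge_{\alpha\in\Gamma_j}(x_{\triangle_j\alpha,s}\leftrightarrow x_{\triangle_j\alpha,s'})$; $\mathrm{eq}^{+\alpha}_i(s,s'):=x_{\triangle_i\alpha,s'}\wedge\bigwedge_{\beta\in\Gamma_i,\beta\ne\alpha}(x_{\triangle_i\beta,s}\leftrightarrow x_{\triangle_i\beta,s'})$; $\mathrm{eq}^{-\alpha}_i(s,s'):=\neg x_{\triangle_i\alpha,s'}\wedge\bigwedge_{\beta\in\Gamma_i,\beta\ne\alpha}(x_{\triangle_i\beta,s}\leftrightarrow x_{\triangle_i\beta,s'})$. $tr_s$: $tr_s(p)=x_{p,s}$; $tr_s(\neg\varphi)=\neg tr_s(\varphi)$; $tr_s(\varphi\wedge\psi)=tr_s(\varphi)\wedge tr_s(\psi)$; $tr_s(\triangle_i\alpha)=x_{\triangle_i\alpha,s}$ if $\alpha\in\Gamma_i$, else $\bot$; $tr_s(\Box_i\varphi)=\forall X_{s''}(E_{i,s,s''}\to tr_{s''}(\varphi))$; $tr_s(\mathcal{A}_i\varphi)=\forall X_{s''}(tr_{s''}(\varphi)\to A_{i,s,s''})$; $tr_s(\mathcal{R}_i\varphi)=\forall X_{s''}(tr_{s''}(\varphi)\to R_{i,s,s''})$; $tr_s(\mathcal{A}^{\mathsf{real}}_i\varphi)=\forall X_{s''}(tr_{s''}(\varphi)\wedge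 E_{i,s,s''}\to A_{i,s,s''})$; $tr_s(\mathcal{R}^{\mathsf{real}}_i\varphi)=\forall X_{s''}(tr_{s''}(\varphi)\wedge E_{i,s,s''}\to R_{i,s,s''})$; $tr_s([\pi]\varphi)=\forall X_{s''}(tr^{\mathrm{prog}}_{s,s''}(\pi)\to tr_{s''}(\varphi))$; where $E_{i,s,s''}:=\bigwedge_{\alpha\in\Gamma_i}(x_{\triangle_i\alpha,s}\to tr_{s''}(\alpha))$, $A_{i,s,s''}:=\bigvee_{(\alpha\to\mathsf{rew}_i)\in\Gamma_i}(x_{\triangle_i(\alpha\to\mathsf{rew}_i),s}\wedge tr_{s''}(\alpha))$, $R_{i,s,s''}:=\bigvee_{(\alpha\to\mathsf{pun}_i)\in\Gamma_i}(x_{\triangle_i(\alpha\to\mathsf{pun}_i),s}\wedge tr_{s''}(\alpha))$. $tr^{\mathrm{prog}}$: $tr^{\mathrm{prog}}_{s,s'}(+_i\alpha)=\bigwedge_{j\ne i}\mathrm{eq}_j(s,s')\wedge\mathrm{eq}^{+\alpha}_i(s,s')\wedge\mathrm{eq}_{\mathrm{prop}}(s,s')$; $tr^{\mathrm{prog}}_{s,s'}(-_i\alpha)=\bigwedge_{j\ne i}\mathrm{eq}_j(s,s')\wedge\mathrm{eq}^{-\alpha}_i(s,s')\wedge\mathrm{eq}_{\mathrm{prop}}(s,s')$; $tr^{\mathrm{prog}}_{s,s'}(\pi_1;\pi_2)=\exists X_{s''}(tr^{\mathrm{prog}}_{s,s''}(\pi_1)\wedge tr^{\mathrm{prog}}_{s'',s'}(\pi_2))$;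 $tr^{\mathrm{prog}}_{s,s'}(\pi_1\cup\pi_2)=tr^{\mathrm{prog}}_{s,s'}(\pi_1)\vee tr^{\mathrm{prog}}_{s,s'}(\pi_2)$; $tr^{\mathrm{prog}}_{s,s'}(?\varphi)=\bigwedge_j\mathrm{eq}_j(s,s')\wedge\mathrm{eq}_{\mathrm{prop}}(s,s')\wedge tr_s(\varphi)$. In each quantified clause $s''$ is a fresh symbol. Finally $\mathrm{desc}_{S_0}(X_s):=\bigwedge_i(\bigwedge_{\alpha\in B_i}x_{\triangle_i\alpha,s}\wedge\bigwedge_{\alpha\in\Gamma_i\setminus B_i}\neg x_{\triangle_i\alpha,s})\wedge\bigwedge_{p\in V}x_{p,s}\wedge\bigwedge_{p\notin V}\neg x_{p,s}$ (over atoms $p$ with $x_{p,s}\in X_s$). *)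

From mathcomp Require Import all_boot.
From Stdlib Require List.

Set Implicit Arguments.
Unset Strict Implicit.
Unset Printing Implicit Defensive.

Inductive atom (n : nat) : Type :=
| AVar : nat -> atom n
| ARew : 'I_n -> atom n
| APun : 'I_n -> atom n.

Inductive L0 (n : nat) : Type :=
| Atom : atom n -> L0 n
| Neg : L0 n -> L0 n
| And : L0 n -> L0 n -> L0 n
| Tri : 'I_n -> L0 n -> L0 n.

Arguments AVar {n} _.
Arguments ARew {n} _.
Arguments APun {n} _.
Arguments Atom {n} _.
Arguments Neg {n} _.
Arguments And {n} _ _.
Arguments Tri {n} _ _.

Definition Impl n (a b : L0 n) : L0 n := Neg (And a (Neg b)).

Definition atom_eq_dec n (a b : atom n) : {a = b} + {a <> b}.
Proof. decide equality; apply: eq_comparable. Defined.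

Definition L0_eq_dec n (a b : L0 n) : {a = b} + {a <> b}.
Proof. decide equality; first exact: atom_eq_dec. apply: eq_comparable. Defined.

Definition L0_eqb n (a b : L0 n) : bool := if L0_eq_dec a b then true else false.

Inductive form (n : nat) : Type :=
| FBase : L0 n -> form n
| FNeg : form n -> form n
| FAnd : form n -> form n -> form n
| FBox : 'I_n -> form n -> form n
| FA : 'I_n -> form n -> form n
| FR : 'I_n -> form n -> form n
| FAreal : 'I_n -> form n -> form n
| FRreal : 'I_n -> form n -> form n
| FProg : prog n -> form n -> form n
with prog (n : nat) : Type :=
| PAdd : 'I_n -> L0 n -> prog n
| PRem : 'I_n -> L0 n -> prog n
| PSeq : prog n -> prog n -> prog n
| PUnion : prog n -> prog n -> prog n
| PTest : form n -> prog n.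

Arguments FBase {n} _.
Arguments FNeg {n} _.
Arguments FAnd {n} _ _.
Arguments FBox {n} _ _.
Arguments FA {n} _ _.
Arguments FR {n} _ _.
Arguments FAreal {n} _ _.
Arguments FRreal {n} _ _.
Arguments FProg {n} _ _.
Arguments PAdd {n} _ _.
Arguments PRem {n} _ _.
Arguments PSeq {n} _ _.
Arguments PUnion {n} _ _.
Arguments PTest {n} _.

(* A state S = ((B_i)_i, V); subsets are represented by their          *)
(* (boolean) characteristic functions.                                  *)
Record state (n : nat) : Type := State {
  st_B : 'I_n -> L0 n -> bool;
  st_V : atom n -> bool }.

Section Semantics.
Variable n : nat.

Fixpoint sat0 (S : state n) (a : L0 n) : Prop :=
  match a with
  | Atom p => st_V S p
  | Neg b => ~ sat0 S b
  | And b c => sat0 S b /\ sat0 S c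
  | Tri i b => st_B S i b
  end.

Definition relE (i : 'I_n) (S S' : state n) : Prop :=
  forall a, st_B S i a -> sat0 S' a.
Definition relA (i : 'I_n) (S S' : state n) : Prop :=
  exists a, st_B S i (Impl a (Atom (ARew i))) /\ sat0 S' a.
Definition relR (i : 'I_n) (S S' : state n) : Prop :=
  exists a, st_B S i (Impl a (Atom (APun i))) /\ sat0 S' a.

Definition in_SG (Gamma : 'I_n -> list (L0 n)) (S : state n) : Prop :=
  forall i a, st_B S i a -> List.In a (Gamma i).

Definition state_eq (S S' : state n) : Prop :=
  (forall p, st_V S' p = st_V S p) /\ (forall j a, st_B S' j a = st_B S j a).

Fixpoint sat (U : state n -> Prop) (S : state n) (f : form n) {struct f} : Prop :=
  match f with
  | FBase a => sat0 S a
  | FNeg g => ~ sat U S g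
  | FAnd g h => sat U S g /\ sat U S h
  | FBox i g => forall S', U S' -> relE i S S' -> sat U S' g
  | FA i g => forall S', U S' -> sat U S' g -> relA i S S'
  | FR i g => forall S', U S' -> sat U S' g -> relR i S S'
  | FAreal i g => forall S', U S' -> sat U S' g -> relE i S S' -> relA i S S'
  | FRreal i g => forall S', U S' -> sat U S' g -> relE i S S' -> relR i S S'
  | FProg p g => forall S', U S' -> trans U p S S' -> sat U S' g
  end
with trans (U : state n -> Prop) (p : prog n) (S S' : state n) {struct p} : Prop :=
  match p with
  | PAdd i a =>
      (forall q, st_V S' q = st_V S q) /\
      (forall b, st_B S' i b = st_B S i b || L0_eqb b a) /\
      (forall j b, j <> i -> st_B S' j b = st_B S j b)
  | PRem i a =>
      (forall q, st_V S' q = st_V S q) /\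
      (forall b, st_B S' i b = st_B S i b && ~~ L0_eqb b a) /\
      (forall j b, j <> i -> st_B S' j b = st_B S j b)
  | PSeq p1 p2 => exists S'', U S'' /\ trans U p1 S S'' /\ trans U p2 S'' S'
  | PUnion p1 p2 => trans U p1 S S' \/ trans U p2 S S'
  | PTest g => state_eq S S' /\ sat U S g
  end.

End Semantics.

(* QBF variable x_{beta,s}: beta in L0, s an abstract symbol (a nat). *)
Definition qvar (n : nat) : Type := (L0 n * nat)%type.

Definition qvar_eq_dec n (v w : qvar n) : {v = w} + {v <> w}.
Proof. decide equality; [apply: eq_comparable | exact: L0_eq_dec]. Defined.

Inductive qbf (n : nat) : Type :=
| QVar : qvar n -> qbf n
| QTrue : qbf n
| QFalse : qbf n
| QNeg : qbf n -> qbf n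
| QAnd : qbf n -> qbf n -> qbf n
| QOr : qbf n -> qbf n -> qbf n
| QImpl : qbf n -> qbf n -> qbf n
| QIff : qbf n -> qbf n -> qbf n
| QForall : qvar n -> qbf n -> qbf n
| QExists : qvar n -> qbf n -> qbf n.

Arguments QVar {n} _.
Arguments QTrue {n}.
Arguments QFalse {n}.
Arguments QNeg {n} _.
Arguments QAnd {n} _ _.
Arguments QOr {n} _ _.
Arguments QImpl {n} _ _.
Arguments QIff {n} _ _.
Arguments QForall {n} _ _.
Arguments QExists {n} _ _.

Definition upd n (nu : qvar n -> bool) (v : qvar n) (b : bool) : qvar n -> bool :=
  fun w => if qvar_eq_dec w v then b else nu w.

Fixpoint qeval n (nu : qvar n -> bool) (f : qbf n) : bool :=
  match f with
  | QVar v => nu v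
  | QTrue => true
  | QFalse => false
  | QNeg g => ~~ qeval nu g
  | QAnd g h => qeval nu g && qeval nu h
  | QOr g h => qeval nu g || qeval nu h
  | QImpl g h => qeval nu g ==> qeval nu h
  | QIff g h => qeval nu g == qeval nu h
  | QForall v g => qeval (upd nu v true) g && qeval (upd nu v false) g
  | QExists v g => qeval (upd nu v true) g || qeval (upd nu v false) g
  end.

(* A QBF is true: evaluated with every free variable set to false
   (for closed formulas the valuation is irrelevant). *)
Definition qbf_true n (f : qbf n) : Prop := qeval (fun _ => false) f.

Definition qAndL n (l : seq (qbf n)) : qbf n := foldr QAnd QTrue l.
Definition qOrL n (l : seq (qbf n)) : qbf n := foldr QOr QFalse l.
Definition QForallL n (vs : seq (qvar n)) (f : qbf n) : qbf n := foldr QForall f vs.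
Definition QExistsL n (vs : seq (qvar n)) (f : qbf n) : qbf n := foldr QExists f vs.

Fixpoint atoms0 n (a : L0 n) : seq (atom n) :=
  match a with
  | Atom p => [:: p]
  | Neg b => atoms0 b
  | And b c => atoms0 b ++ atoms0 c
  | Tri _ b => atoms0 b
  end.

Fixpoint atoms_form n (f : form n) : seq (atom n) :=
  match f with
  | FBase a => atoms0 a
  | FNeg g => atoms_form g
  | FAnd g h => atoms_form g ++ atoms_form h
  | FBox _ g | FA _ g | FR _ g | FAreal _ g | FRreal _ g => atoms_form g
  | FProg p g => atoms_prog p ++ atoms_form g
  end
with atoms_prog n (p : prog n) : seq (atom n) :=
  match p with
  | PAdd _ a | PRem _ a => atoms0 a
  | PSeq p1 p2 | PUnion p1 p2 => atoms_prog p1 ++ atoms_prog p2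
  | PTest g => atoms_form g
  end.

Definition atoms_of n (Gamma : 'I_n -> list (L0 n)) (phi0 : form n) : seq (atom n) :=
  flatten [seq flatten [seq atoms0 a | a <- Gamma i] | i <- enum 'I_n] ++ atoms_form phi0.

Section Translation.
Variable n : nat.
Variable Gamma : 'I_n -> list (L0 n).
Variable atms : seq (atom n).   (* atoms occurring in Gamma or phi0 *)

Definition qv (b : L0 n) (s : nat) : qbf n := QVar (b, s).

Definition inGamma (i : 'I_n) (a : L0 n) : bool :=
  if List.in_dec (@L0_eq_dec n) a (Gamma i) then true else false.

Definition ante_of (q : atom n) (a : L0 n) : option (L0 n) :=
  match a with
  | Neg (And al (Neg (Atom q'))) => if atom_eq_dec q' q then Some al else None
  | _ => None
  end.

Definition Xs (s : nat) : seq (qvar n) :=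
  flatten [seq [seq (Tri i a, s) | a <- Gamma i]
               ++ [seq (Tri i (Impl a (Atom (ARew i))), s) | a <- pmap (ante_of (ARew i)) (Gamma i)]
               ++ [seq (Tri i (Impl a (Atom (APun i))), s) | a <- pmap (ante_of (APun i)) (Gamma i)]
          | i <- enum 'I_n]
  ++ [seq (Atom p, s) | p <- atms].

Fixpoint tr0 (s : nat) (a : L0 n) : qbf n :=
  match a with
  | Atom p => qv (Atom p) s
  | Neg b => QNeg (tr0 s b)
  | And b c => QAnd (tr0 s b) (tr0 s c)
  | Tri i b => if inGamma i b then qv (Tri i b) s else QFalse
  end.

Definition Ef (i : 'I_n) (s s'' : nat) : qbf n :=
  qAndL [seq QImpl (qv (Tri i a) s) (tr0 s'' a) | a <- Gamma i].
Definition Af (i : 'I_n) (s s'' : nat) : qbf n :=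
  qOrL [seq QAnd (qv (Tri i (Impl al (Atom (ARew i)))) s) (tr0 s'' al)
       | al <- pmap (ante_of (ARew i)) (Gamma i)].
Definition Rf (i : 'I_n) (s s'' : nat) : qbf n :=
  qOrL [seq QAnd (qv (Tri i (Impl al (Atom (APun i)))) s) (tr0 s'' al)
       | al <- pmap (ante_of (APun i)) (Gamma i)].

Definition eq_prop (s s' : nat) : qbf n :=
  qAndL [seq QIff (qv (Atom p) s) (qv (Atom p) s') | p <- atms].
Definition eq_ag (j : 'I_n) (s s' : nat) : qbf n :=
  qAndL [seq QIff (qv (Tri j a) s) (qv (Tri j a) s') | a <- Gamma j].
Definition eq_others (i : 'I_n) (a : L0 n) (s s' : nat) : qbf n :=
  qAndL [seq QIff (qv (Tri i b) s) (qv (Tri i b) s') | b <- Gamma i & ~~ L0_eqb b a].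
Definition eq_plus (i : 'I_n) (a : L0 n) (s s' : nat) : qbf n :=
  QAnd (qv (Tri i a) s') (eq_others i a s s').
Definition eq_minus (i : 'I_n) (a : L0 n) (s s' : nat) : qbf n :=
  QAnd (QNeg (qv (Tri i a) s')) (eq_others i a s s').
Definition eq_all_but (i : 'I_n) (s s' : nat) : qbf n :=
  qAndL [seq eq_ag j s s' | j <- enum 'I_n & j != i].
Definition eq_all (s s' : nat) : qbf n :=
  qAndL [seq eq_ag j s s' | j <- enum 'I_n].

(* d is the fresh-symbol supply: all symbols in scope are < d, and the
   symbol d is the fresh s'' introduced by the current clause. *)
Fixpoint tr (d s : nat) (f : form n) {struct f} : qbf n :=
  match f with
  | FBase a => tr0 s a
  | FNeg g => QNeg (tr d s g)
  | FAnd g h => QAnd (tr d s g) (tr d s h)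
  | FBox i g => QForallL (Xs d) (QImpl (Ef i s d) (tr d.+1 d g))
  | FA i g => QForallL (Xs d) (QImpl (tr d.+1 d g) (Af i s d))
  | FR i g => QForallL (Xs d) (QImpl (tr d.+1 d g) (Rf i s d))
  | FAreal i g => QForallL (Xs d) (QImpl (QAnd (tr d.+1 d g) (Ef i s d)) (Af i s d))
  | FRreal i g => QForallL (Xs d) (QImpl (QAnd (tr d.+1 d g) (Ef i s d)) (Rf i s d))
  | FProg p g => QForallL (Xs d) (QImpl (trprog d.+1 s d p) (tr d.+1 d g))
  end
with trprog (d s s' : nat) (p : prog n) {struct p} : qbf n :=
  match p with
  | PAdd i a => QAnd (eq_all_but i s s') (QAnd (eq_plus i a s s') (eq_prop s s'))
  | PRem i a => QAnd (eq_all_but i s s') (QAnd (eq_minus i a s s') (eq_prop s s'))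
  | PSeq p1 p2 => QExistsL (Xs d) (QAnd (trprog d.+1 s d p1) (trprog d.+1 d s' p2))
  | PUnion p1 p2 => QOr (trprog d s s' p1) (trprog d s s' p2)
  | PTest g => QAnd (eq_all s s') (QAnd (eq_prop s s') (tr d s g))
  end.

Definition desc (S0 : state n) (s : nat) : qbf n :=
  QAnd (qAndL [seq QAnd (qAndL [seq qv (Tri i a) s | a <- Gamma i & st_B S0 i a])
                        (qAndL [seq QNeg (qv (Tri i a) s) | a <- Gamma i & ~~ st_B S0 i a])
              | i <- enum 'I_n])
       (QAnd (qAndL [seq qv (Atom p) s | p <- atms & st_V S0 p])
             (qAndL [seq QNeg (qv (Atom p) s) | p <- atms & ~~ st_V S0 p])).

End Translation.

Definition translation n (Gamma : 'I_n -> list (L0 n)) (phi0 : form n)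
    (S0 : state n) : qbf n :=
  let atms := atoms_of Gamma phi0 in
  QExistsL (Xs Gamma atms 0) (QAnd (desc Gamma atms S0 0) (tr Gamma atms 1 0 phi0)).

(* A valuation of the QBF variables with symbol s "encodes" a state of S_Gamma: x_{Tri i a,s}
   holds iff a is in B_i (for a in Gamma_i) and x_{p,s} holds iff p is in V (for the atoms p of
   Gamma and phi0).  Quantifying over the block X_d then amounts to quantifying over the states
   of S_Gamma, up to the valuation of atoms outside Gamma and phi0, which neither side can
   observe.  Each clause of tr/trprog introduces a fresh symbol d larger than all symbols in
   scope, so re-encoding level d leaves the states encoded at lower levels untouched, and the
   theorem follows by a simultaneous induction on formulas and programs. *)

From Pilot Require Import Defs.
From HB Require Import structures.
From mathcomp Require Import all_boot.

Set Implicit Arguments.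
Unset Strict Implicit.
Unset Printing Implicit Defensive.

HB.instance Definition _ (n : nat) := comparableMixin (@atom_eq_dec n).
HB.instance Definition _ (n : nat) := comparableMixin (@L0_eq_dec n).

Lemma L0_eqbE n (a b : L0 n) : L0_eqb a b = (a == b).
Proof. by rewrite /L0_eqb; case: L0_eq_dec => /= H; apply/esym/eqP. Qed.

Lemma InP (T : eqType) (x : T) s : reflect (List.In x s) (x \in s).
Proof.
apply: (iffP idP); elim: s => //= y s IH; rewrite in_cons.
  by case/orP => [/eqP->|/IH]; auto.
by case=> [->|/IH->]; rewrite ?eqxx ?orbT.
Qed.

Lemma iff_negb (P : Prop) (b : bool) : (P <-> b) -> (~ P <-> ~~ b).
Proof. by case: b => -[H1 H2]; split=> //; [move/(_ (H2 isT)) | move=> _ /H1]. Qed.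

Lemma iff_andb (P Q : Prop) (b c : bool) : (P <-> b) -> (Q <-> c) -> (P /\ Q <-> b && c).
Proof. by move=> [H1 H2] [H3 H4]; split=> [[/H1-> /H3->]|/andP[/H2 ? /H4 ?]]. Qed.

Lemma iff_orb_frame (P Q X : Prop) (b c : bool) :
  (P <-> X /\ b) -> (Q <-> X /\ c) -> (P \/ Q <-> X /\ (b || c)).
Proof.
move=> [H1 H2] [H3 H4].
split=> [[/H1|/H3] [x ->]|[x /orP[/(conj x)/H2|/(conj x)/H4]]];
  by [split; rewrite ?orbT | left | right].
Qed.

Lemma curry_forall (T : Type) (U P Q R : T -> Prop) :
  (forall x, U x -> P x -> Q x -> R x) <-> (forall x, U x -> P x /\ Q x -> R x).
Proof. by split=> [H x ? []|H x ? ? ?]; [apply: H | apply: H]. Qed.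

Lemma sub_catP (T : eqType) (s1 s2 A : seq T) :
  {subset s1 ++ s2 <= A} -> {subset s1 <= A} /\ {subset s2 <= A}.
Proof. by move=> H; split=> x xs; apply: H; rewrite mem_cat xs ?orbT. Qed.

Section QBF.
Variable n : nat.
Implicit Types (nu : qvar n -> bool) (f : qbf n) (vs : seq (qvar n)).

Definition eq_outside vs nu nu' := forall w, w \notin vs -> nu' w = nu w.

Lemma updE nu v b w : upd nu v b w = if w == v then b else nu w.
Proof.
by rewrite /upd; case: (qvar_eq_dec w v) => [e|/eqP/negbTE] /=; [rewrite e eqxx | move->].
Qed.

Lemma qeval_ext f nu nu' : nu =1 nu' -> qeval nu f = qeval nu' f.
Proof.
have updE_ext v b nu1 nu2 : nu1 =1 nu2 -> upd nu1 v b =1 upd nu2 v b.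
  by move=> E w; rewrite !updE E.
elim: f nu nu' => /= [v|||g IH|g IHg h IHh|g IHg h IHh|g IHg h IHh|g IHg h IHh|v g IH|v g IH]
  nu nu' E; rewrite ?E ?(IH _ _ E) ?(IHg _ _ E) ?(IHh _ _ E) //.
all: by rewrite (IH _ _ (updE_ext v true _ _ E)) (IH _ _ (updE_ext v false _ _ E)).
Qed.

Lemma eq_outside_cons_upd v vs nu nu' :
  eq_outside (v :: vs) nu nu' -> eq_outside vs (upd nu v (nu' v)) nu'.
Proof.
move=> E w wvs; rewrite updE; case: eqVneq => [->//|wv].
by rewrite E // in_cons negb_or wv.
Qed.

Lemma eq_outside_upd_cons v vs nu nu' b :
  eq_outside vs (upd nu v b) nu' -> eq_outside (v :: vs) nu nu'.
Proof. by move=> E w; rewrite in_cons negb_or => /andP[wv /E->]; rewrite updE (negbTE wv). Qed.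

Lemma eq_outside_nil nu nu' f : eq_outside [::] nu nu' -> qeval nu' f = qeval nu f.
Proof. by move=> E; apply: qeval_ext => w; rewrite E. Qed.

Lemma qeval_QForallL vs f nu :
  qeval nu (QForallL vs f) <-> (forall nu', eq_outside vs nu nu' -> qeval nu' f).
Proof.
elim: vs nu => [|v vs IH] nu /=.
  by split=> [H nu' /eq_outside_nil->|]; last apply.
split=> [/andP[Ht Hf] nu' /eq_outside_cons_upd|H].
  by case: (nu' v); [move: Ht | move: Hf] => /IH; apply.
by apply/andP; split; apply/IH => nu' /eq_outside_upd_cons; apply: H.
Qed.

Lemma qeval_QExistsL vs f nu :
  qeval nu (QExistsL vs f) <-> (exists2 nu', eq_outside vs nu nu' & qeval nu' f).
Proof.
elim: vs nu => [|v vs IH] nu /=.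
  by split=> [|[nu' /eq_outside_nil<-//]]; exists nu.
split=> [/orP[] /IH[nu' /eq_outside_upd_cons]|[nu' /eq_outside_cons_upd]]; try by exists nu'.
by case: (nu' v) => H Hf; apply/orP; [left|right]; apply/IH; exists nu'.
Qed.

Lemma qeval_qAndL nu (l : seq (qbf n)) : qeval nu (qAndL l) = all (qeval nu) l.
Proof. by elim: l => //= g l ->. Qed.

Lemma qeval_qOrL nu (l : seq (qbf n)) : qeval nu (qOrL l) = has (qeval nu) l.
Proof. by elim: l => //= g l ->. Qed.

Lemma qeval_literals (T : Type) (l : seq T) (v : T -> qvar n) (c : T -> bool) nu :
  qeval nu (qAndL [seq QVar (v x) | x <- l & c x])
    && qeval nu (qAndL [seq QNeg (QVar (v x)) | x <- l & ~~ c x])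
  = all (fun x => nu (v x) == c x) l.
Proof.
by elim: l => //= x l <-; case: (c x) => /=; case: (nu (v x)); rewrite /= ?andbF.
Qed.

Definition qlit (c : bool) f := if c then f else QNeg f.

Lemma qeval_qlit c f nu : qeval nu (qlit c f) = (qeval nu f == c).
Proof. by case: c; rewrite /= ?eqb_id ?eqbF_neg. Qed.

End QBF.

Lemma ante_ofP n (q : atom n) b al : ante_of q b = Some al -> b = Impl al (Atom q).
Proof.
case: b => // -[] // al' [] // [] // q' /=.
by case: (atom_eq_dec q' q) => // e [<-]; rewrite e.
Qed.

Lemma mem_pmap_ante n (q : atom n) a s :
  (a \in pmap (ante_of q) s) = (Impl a (Atom q) \in s).
Proof.
rewrite mem_pmap; apply/mapP/idP => [[b bs /esym/ante_ofP <-] //|qs].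
by exists (Impl a (Atom q)) => //=; case: atom_eq_dec.
Qed.

Section Encoding.
Variables (n : nat) (Gamma : 'I_n -> list (L0 n)) (atms : seq (atom n)).
Implicit Types (nu : qvar n -> bool) (S : state n).

Lemma in_SG_mem S i a : in_SG Gamma S -> st_B S i a -> a \in Gamma i.
Proof. by move=> HS /HS /InP. Qed.

Lemma in_SG_notin S i a : in_SG Gamma S -> a \notin Gamma i -> st_B S i a = false.
Proof. by move=> HS; apply: contraNF => /(in_SG_mem HS). Qed.

Lemma inGammaE i a : inGamma Gamma i a = (a \in Gamma i).
Proof.
rewrite /inGamma; case: List.in_dec => [/InP -> //|aG].
by apply/esym/negP => /InP.
Qed.

Lemma mem_Xs_level d w : w \in Xs Gamma atms d -> w.2 = d.
Proof.
rewrite mem_cat => /orP[/flattenP[l /mapP[i _ ->]] | /mapP[p _ ->]] //.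
by rewrite !mem_cat => /or3P[] /mapP[a _ ->].
Qed.

Lemma mem_Xs_Tri d i a k : (Tri i a, k) \in Xs Gamma atms d -> a \in Gamma i.
Proof.
rewrite mem_cat => /orP[/flattenP[l /mapP[j _ ->]] | /mapP[p _ //]].
by rewrite !mem_cat => /or3P[] /mapP[b bG [-> -> _]] //; rewrite mem_pmap_ante in bG.
Qed.

Lemma Tri_mem_Xs d i a : a \in Gamma i -> (Tri i a, d) \in Xs Gamma atms d.
Proof.
move=> aG; rewrite mem_cat; apply/orP; left; apply/flattenP.
eexists; first by apply/mapP; exists i; rewrite ?mem_enum.
by rewrite mem_cat map_f.
Qed.

Lemma Atom_mem_Xs d p : p \in atms -> (Atom p, d) \in Xs Gamma atms d.
Proof. by move=> pa; rewrite mem_cat map_f ?orbT. Qed.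

Definition encodes nu s S :=
  [/\ in_SG Gamma S,
      forall i a, a \in Gamma i -> nu (Tri i a, s) = st_B S i a
    & forall p, p \in atms -> nu (Atom p, s) = st_V S p].

(* The variables x_{Tri i a,k} with a outside Gamma_i are never quantified, so they keep the
   value false that qbf_true gives to free variables; this makes the translation of +_i a with
   a outside Gamma_i false, as there is no target state in S_Gamma. *)
Definition vocab_clean nu := forall i a k, a \notin Gamma i -> nu (Tri i a, k) = false.

Definition same_off_atms S S' := forall p, p \notin atms -> st_V S' p = st_V S p.

Definition relevel nu d nu' S' :=
  [/\ vocab_clean nu', encodes nu' d S'
    & forall s S, s < d -> encodes nu s S -> encodes nu' s S].

Definition state_val S (w : qvar n) : bool :=
  match w.1 with Tri i a => st_B S i a | Atom p => st_V S p | _ => false end.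

Definition set_level nu d S : qvar n -> bool :=
  fun w => if w \in Xs Gamma atms d then state_val S w else nu w.

Definition decode nu d S0 : state n :=
  State (fun i a => (a \in Gamma i) && nu (Tri i a, d))
        (fun p => if p \in atms then nu (Atom p, d) else st_V S0 p).

Lemma encodes_eq_outside nu nu' d s S :
  eq_outside (Xs Gamma atms d) nu nu' -> s != d -> encodes nu s S -> encodes nu' s S.
Proof.
move=> E sd [HS HB HV]; have out b : (b, s) \notin Xs Gamma atms d.
  by apply: contra sd => /mem_Xs_level /= ->.
by split=> // [i a aG|p pa]; rewrite E ?out ?HB ?HV.
Qed.

Lemma vocab_clean_eq_outside nu nu' d :
  eq_outside (Xs Gamma atms d) nu nu' -> vocab_clean nu -> vocab_clean nu'.
Proof. by move=> E C i a k aG; rewrite E ?C //; apply: contra aG => /mem_Xs_Tri. Qed.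

Lemma relevel_eq_outside nu nu' d S' :
  vocab_clean nu -> eq_outside (Xs Gamma atms d) nu nu' -> encodes nu' d S' ->
  relevel nu d nu' S'.
Proof.
move=> C E E'; split=> // [|s S sd]; first exact: vocab_clean_eq_outside E C.
by apply: encodes_eq_outside E _; rewrite ltn_eqF.
Qed.

Lemma set_level_eq_outside nu d S : eq_outside (Xs Gamma atms d) nu (set_level nu d S).
Proof. by move=> w /negbTE wX; rewrite /set_level wX. Qed.

Lemma relevel_set_level nu d S :
  vocab_clean nu -> in_SG Gamma S -> relevel nu d (set_level nu d S) S.
Proof.
move=> C HS; apply: (relevel_eq_outside C (@set_level_eq_outside nu d S)).
by split=> // [i a aG|p pa]; rewrite /set_level ?Tri_mem_Xs ?Atom_mem_Xs.
Qed.

Lemma relevel_decode nu nu' d S0 :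
  vocab_clean nu -> eq_outside (Xs Gamma atms d) nu nu' -> relevel nu d nu' (decode nu' d S0).
Proof.
move=> C E; apply: relevel_eq_outside C E _.
by split=> [i a /= /andP[/InP]|i a /= ->|p /= ->].
Qed.

Lemma same_off_atms_decode nu d S0 : same_off_atms S0 (decode nu d S0).
Proof. by move=> p /negbTE /= ->. Qed.

Lemma qeval_forall_states nu d S (R : state n -> Prop) F :
  vocab_clean nu ->
  (forall nu' S', relevel nu d nu' S' -> same_off_atms S S' -> R S' -> qeval nu' F) ->
  (forall nu' S', relevel nu d nu' S' -> qeval nu' F -> R S') ->
  (forall S', in_SG Gamma S' -> R S') <-> qeval nu (QForallL (Xs Gamma atms d) F).
Proof.
move=> C complete sound; rewrite qeval_QForallL; split=> [H nu' E | H S' HS].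
  have lv := relevel_decode S C E; have [_ [HS _ _] _] := lv.
  by apply: complete lv _ (H _ HS); apply: same_off_atms_decode.
by apply: sound (relevel_set_level d C HS) _; apply/H/set_level_eq_outside.
Qed.

Lemma qeval_exists_states nu d S (R : state n -> Prop) F :
  vocab_clean nu ->
  (forall nu' S', relevel nu d nu' S' -> R S' -> qeval nu' F) ->
  (forall nu' S', relevel nu d nu' S' -> same_off_atms S S' -> qeval nu' F -> R S') ->
  (exists S', in_SG Gamma S' /\ R S') <-> qeval nu (QExistsL (Xs Gamma atms d) F).
Proof.
move=> C complete sound; rewrite qeval_QExistsL; split=> [[S' [HS HR]] | [nu' E HF]].
  exists (set_level nu d S'); first exact: set_level_eq_outside.
  exact: complete (relevel_set_level d C HS) HR.
have lv := relevel_decode S C E; have [_ [HS _ _] _] := lv.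
by exists (decode nu' d S); split=> //; apply: sound lv _ HF; apply: same_off_atms_decode.
Qed.

Lemma qeval_forall_impl_states nu d S (P Q : state n -> Prop) A B :
  vocab_clean nu ->
  (forall nu' S', relevel nu d nu' S' -> P S' -> qeval nu' A) ->
  (forall nu' S', relevel nu d nu' S' -> same_off_atms S S' -> qeval nu' A -> P S') ->
  (forall nu' S', relevel nu d nu' S' -> (Q S' <-> qeval nu' B)) ->
  (forall S', in_SG Gamma S' -> P S' -> Q S') <->
  qeval nu (QForallL (Xs Gamma atms d) (QImpl A B)).
Proof.
move=> C PA AP QB; apply: qeval_forall_states => // nu' S' lv.
  by move=> off PQ /=; apply/implyP => /(AP _ _ lv off) /PQ /(QB _ _ lv).
by move=> /= /implyP AB /(PA _ _ lv) /AB /(QB _ _ lv).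
Qed.

End Encoding.

Lemma trans_V_eq n (U : state n -> Prop) p S S' : Defs.trans U p S S' -> st_V S' =1 st_V S.
Proof.
elim: p S S' => [i a|i a|p1 IH1 p2 IH2|p1 IH1 p2 IH2|g] S S' /=.
- by case.
- by case.
- by move=> [S'' [_ [/IH1 V1 /IH2 V2]]] q; rewrite V2 V1.
- by case=> [/IH1|/IH2].
- by case=> [[]].
Qed.

Scheme form_ind2 := Induction for form Sort Prop
  with prog_ind2 := Induction for prog Sort Prop.
Combined Scheme form_prog_ind from form_ind2, prog_ind2.

Section Translation.
Variables (n : nat) (Gamma : 'I_n -> list (L0 n)) (atms : seq (atom n)).
Hypothesis Gamma_atoms : forall j a, a \in Gamma j -> {subset atoms0 a <= atms}.
Implicit Types (nu : qvar n -> bool) (S : state n).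

Local Notation encodes := (encodes Gamma atms).
Local Notation same_off_atms := (same_off_atms atms).
Local Notation relevel := (relevel Gamma atms).

Lemma tr0_iff nu s S a :
  encodes nu s S -> {subset atoms0 a <= atms} -> (sat0 S a <-> qeval nu (tr0 Gamma s a)).
Proof.
case=> HS HB HV; elim: a => [p|b IH|b IHb c IHc|i b _] /= sub.
- by rewrite /qv /= HV // sub // mem_head.
- exact/iff_negb/IH.
- by have [/IHb ? /IHc ?] := sub_catP sub; apply: iff_andb.
- rewrite inGammaE; case: (boolP (b \in Gamma i)) => bG; first by rewrite /qv /= HB.
  by rewrite (in_SG_notin HS bG).
Qed.

Lemma relE_iff i nu s d S S' :
  encodes nu s S -> encodes nu d S' -> (relE i S S' <-> qeval nu (Ef Gamma i s d)).
Proof.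
move=> [HS HB _] E'; rewrite /Ef qeval_qAndL all_map; split.
  move=> H; apply/allP => a aG /=; apply/implyP; rewrite /qv /= HB // => /H.
  by move/(tr0_iff E' (Gamma_atoms aG)).
move=> /allP H a Ba; have aG := in_SG_mem HS Ba.
by have := H a aG; rewrite /= /qv /= HB // Ba => /(tr0_iff E' (Gamma_atoms aG)).
Qed.

Lemma trigger_iff (q : atom n) i nu s d S S' :
  encodes nu s S -> encodes nu d S' ->
  (exists a, st_B S i (Impl a (Atom q)) /\ sat0 S' a) <->
  qeval nu (qOrL [seq QAnd (qv (Tri i (Impl al (Atom q))) s) (tr0 Gamma d al)
                 | al <- pmap (ante_of q) (Gamma i)]).
Proof.
move=> [HS HB _] E'; rewrite qeval_qOrL has_map.
have sub a : Impl a (Atom q) \in Gamma i -> {subset atoms0 a <= atms}.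
  by move=> aG x xa; apply: (Gamma_atoms aG); rewrite /= mem_cat xa.
split=> [[a [Ba Sa]]|/hasP[a]].
  have aG := in_SG_mem HS Ba; apply/hasP; exists a; first by rewrite mem_pmap_ante.
  by rewrite /= /qv /= HB // Ba; apply/(tr0_iff E' (sub _ aG)).
rewrite mem_pmap_ante => aG /= /andP[Ha /(tr0_iff E' (sub _ aG)) Sa].
by exists a; rewrite -HB.
Qed.

Lemma desc_iff nu s S :
  in_SG Gamma S -> (qeval nu (desc Gamma atms S s) <-> encodes nu s S).
Proof.
move=> HS; rewrite /desc /qv /= qeval_literals qeval_qAndL all_map.
under eq_all => i do rewrite /= qeval_literals.
split=> [/andP[/allP HB /allP HV]|[_ HB HV]].
  split=> // [i a aG|p pa]; apply/eqP; [exact: (allP (HB i (mem_enum _ i))) | exact: HV].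
apply/andP; split; first by apply/allP => i _; apply/allP => a aG; rewrite /= HB.
by apply/allP => p pa; rewrite /= HV.
Qed.

Lemma eq_prop_frame nu s s' S S' :
  encodes nu s S -> encodes nu s' S' ->
  (forall q, st_V S' q = st_V S q) <-> same_off_atms S S' /\ qeval nu (eq_prop atms s s').
Proof.
move=> [_ _ HV] [_ _ HV']; rewrite /eq_prop qeval_qAndL all_map; split.
  by move=> H; split=> [q _|]; [exact: H | apply/allP => p pa /=; rewrite /qv /= HV // HV' // H].
move=> [off /allP H] q; case: (boolP (q \in atms)) => qa; last exact: off.
by have := H q qa; rewrite /= /qv /= HV // HV' // => /eqP.
Qed.

Lemma eq_ag_iff j nu s s' S S' :
  encodes nu s S -> encodes nu s' S' ->
  (qeval nu (eq_ag Gamma j s s') <-> forall b, st_B S' j b = st_B S j b).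
Proof.
move=> [HS HB _] [HS' HB' _]; rewrite /eq_ag qeval_qAndL all_map; split.
  move=> /allP H b; case: (boolP (b \in Gamma j)) => bG.
    by have := H b bG; rewrite /= /qv /= HB // HB' // => /eqP.
  by rewrite (in_SG_notin HS bG) (in_SG_notin HS' bG).
by move=> H; apply/allP => b bG /=; rewrite /qv /= HB // HB' // H.
Qed.

Lemma eq_all_but_iff i nu s s' S S' :
  encodes nu s S -> encodes nu s' S' ->
  (qeval nu (eq_all_but Gamma i s s') <-> forall j b, j <> i -> st_B S' j b = st_B S j b).
Proof.
move=> E E'; rewrite /eq_all_but qeval_qAndL all_map all_filter; split.
  move=> /allP H j b /eqP ji.
  by move: (H j (mem_enum _ j)) => /= /implyP/(_ ji)/(eq_ag_iff j E E'); apply.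
move=> H; apply/allP => j _ /=; apply/implyP => /eqP ji.
by apply/(eq_ag_iff j E E') => b; apply: H.
Qed.

Lemma eq_all_iff nu s s' S S' :
  encodes nu s S -> encodes nu s' S' ->
  (qeval nu (Defs.eq_all Gamma s s') <-> forall j b, st_B S' j b = st_B S j b).
Proof.
move=> E E'; rewrite /Defs.eq_all qeval_qAndL all_map; split.
  by move=> /allP H j b; move: (H j (mem_enum _ j)) => /= /(eq_ag_iff j E E'); apply.
by move=> H; apply/allP => j _ /=; apply/(eq_ag_iff j E E').
Qed.

Lemma eq_others_iff i a nu s s' S S' :
  encodes nu s S -> encodes nu s' S' ->
  (qeval nu (eq_others Gamma i a s s') <-> forall b, b != a -> st_B S' i b = st_B S i b).
Proof.
move=> [HS HB _] [HS' HB' _]; rewrite /eq_others qeval_qAndL all_map all_filter; split.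
  move=> /allP H b ba; case: (boolP (b \in Gamma i)) => bG.
    by have := H b bG; rewrite /= L0_eqbE ba /= /qv /= HB // HB' // => /eqP.
  by rewrite (in_SG_notin HS bG) (in_SG_notin HS' bG).
move=> H; apply/allP => b bG /=; rewrite L0_eqbE; apply/implyP => ba.
by rewrite /qv /= HB // HB' // H.
Qed.

Lemma eq_update_iff (op : bool -> bool -> bool) (c : bool) i a nu s s' S S' :
  (forall x, op x true = c) -> (forall x, op x false = x) ->
  vocab_clean Gamma nu -> encodes nu s S -> encodes nu s' S' ->
  qeval nu (QAnd (qlit c (qv (Tri i a) s'))
                 (eq_others Gamma i a s s')) <->
  (forall b, st_B S' i b = op (st_B S i b) (L0_eqb b a)).
Proof.
move=> opT opF C E E'; have [HS' HB' _] := E'.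
have x_a : nu (Tri i a, s') = st_B S' i a.
  case: (boolP (a \in Gamma i)) => aG; first exact: HB'.
  by rewrite C // (in_SG_notin HS' aG).
rewrite /= qeval_qlit [qeval _ _]/= x_a.
split=> [/andP[/eqP Ha /(eq_others_iff _ _ E E') Ho] b|H].
  by rewrite L0_eqbE; case: eqVneq => [->|/Ho->]; rewrite ?opT ?opF.
apply/andP; split; first by rewrite H L0_eqbE eqxx opT.
by apply/(eq_others_iff _ _ E E') => b ba; rewrite H L0_eqbE (negbTE ba) opF.
Qed.

Lemma update_iff (op : bool -> bool -> bool) (c : bool) i a nu s s' S S' :
  (forall x, op x true = c) -> (forall x, op x false = x) ->
  vocab_clean Gamma nu -> encodes nu s S -> encodes nu s' S' ->
  (forall q, st_V S' q = st_V S q) /\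
  (forall b, st_B S' i b = op (st_B S i b) (L0_eqb b a)) /\
  (forall j b, j <> i -> st_B S' j b = st_B S j b) <->
  same_off_atms S S' /\
  qeval nu (QAnd (eq_all_but Gamma i s s')
                 (QAnd (QAnd (qlit c (qv (Tri i a) s'))
                             (eq_others Gamma i a s s'))
                       (eq_prop atms s s'))).
Proof.
move=> opT opF C E E'.
have EA := eq_all_but_iff i E E'; have EU := eq_update_iff i a opT opF C E E'.
split=> [[/(eq_prop_frame E E')[off Hp] [/EU Hi /EA Hj]]|[off /and3P[/EA Hj /EU Hi Hp]]].
  by split=> //; apply/and3P.
by split; [apply/(eq_prop_frame E E') | split].
Qed.

Definition form_correct f :=
  forall d s nu S, {subset atoms_form f <= atms} -> s < d ->
  vocab_clean Gamma nu -> encodes nu s S ->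
  (sat (in_SG Gamma) S f <-> qeval nu (tr Gamma atms d s f)).

(* Programs keep V unchanged on every atom, whereas the translation only compares the atoms
   in atms. *)
Definition prog_correct p :=
  forall d s s' nu S S', {subset atoms_prog p <= atms} -> s < d -> s' < d ->
  vocab_clean Gamma nu -> encodes nu s S -> encodes nu s' S' ->
  (Defs.trans (in_SG Gamma) p S S' <->
   same_off_atms S S' /\ qeval nu (trprog Gamma atms d s s' p)).

Lemma form_correct_relevel g d nu nu' S' :
  form_correct g -> {subset atoms_form g <= atms} -> relevel nu d nu' S' ->
  (sat (in_SG Gamma) S' g <-> qeval nu' (tr Gamma atms d.+1 d g)).
Proof. by move=> IH sub [C' E' _]; apply: IH. Qed.

Lemma prog_correct_relevel p s d nu S nu' S' :
  prog_correct p -> {subset atoms_prog p <= atms} -> s < d -> encodes nu s S ->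
  relevel nu d nu' S' ->
  (Defs.trans (in_SG Gamma) p S S' <->
   same_off_atms S S' /\ qeval nu' (trprog Gamma atms d.+1 s d p)).
Proof. by move=> IH sub sd E [C' E' lift]; apply: IH => //; [apply: ltnW | apply: lift]. Qed.

Lemma relE_relevel i s d nu S nu' S' :
  s < d -> encodes nu s S -> relevel nu d nu' S' ->
  (relE i S S' <-> qeval nu' (Ef Gamma i s d)).
Proof. by move=> sd E [_ E' lift]; apply: relE_iff (lift _ _ sd E) E'. Qed.

Lemma trigger_relevel (q : atom n) i s d nu S nu' S' :
  s < d -> encodes nu s S -> relevel nu d nu' S' ->
  (exists a, st_B S i (Impl a (Atom q)) /\ sat0 S' a) <->
  qeval nu' (qOrL [seq QAnd (qv (Tri i (Impl al (Atom q))) s) (tr0 Gamma d al)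
                  | al <- pmap (ante_of q) (Gamma i)]).
Proof. by move=> sd E [_ E' lift]; apply: trigger_iff (lift _ _ sd E) E'. Qed.

Lemma FBox_correct i g : form_correct g -> form_correct (FBox i g).
Proof.
move=> IH d s nu S sub sd C E /=.
apply: (qeval_forall_impl_states (S := S)) => // nu' S' lv.
- by move/(relE_relevel i sd E lv).
- by move=> _ /(relE_relevel i sd E lv).
- exact: form_correct_relevel IH sub lv.
Qed.

Lemma FA_correct i g : form_correct g -> form_correct (FA i g).
Proof.
move=> IH d s nu S sub sd C E /=.
apply: (qeval_forall_impl_states (S := S)) => // nu' S' lv.
- by move/(form_correct_relevel IH sub lv).
- by move=> _ /(form_correct_relevel IH sub lv).
- exact: (trigger_relevel (ARew i) i sd E lv).
Qed.

Lemma FR_correct i g : form_correct g -> form_correct (FR i g).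
Proof.
move=> IH d s nu S sub sd C E /=.
apply: (qeval_forall_impl_states (S := S)) => // nu' S' lv.
- by move/(form_correct_relevel IH sub lv).
- by move=> _ /(form_correct_relevel IH sub lv).
- exact: (trigger_relevel (APun i) i sd E lv).
Qed.

Lemma FAreal_correct i g : form_correct g -> form_correct (FAreal i g).
Proof.
move=> IH d s nu S sub sd C E /=; rewrite curry_forall.
apply: (qeval_forall_impl_states (S := S)) => // nu' S' lv;
  have PA := iff_andb (form_correct_relevel IH sub lv) (relE_relevel i sd E lv).
- by move/PA.
- by move=> _ /PA.
- exact: (trigger_relevel (ARew i) i sd E lv).
Qed.

Lemma FRreal_correct i g : form_correct g -> form_correct (FRreal i g).
Proof.
move=> IH d s nu S sub sd C E /=; rewrite curry_forall.
apply: (qeval_forall_impl_states (S := S)) => // nu' S' lv;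
  have PA := iff_andb (form_correct_relevel IH sub lv) (relE_relevel i sd E lv).
- by move/PA.
- by move=> _ /PA.
- exact: (trigger_relevel (APun i) i sd E lv).
Qed.

Lemma FProg_correct p g : prog_correct p -> form_correct g -> form_correct (FProg p g).
Proof.
move=> IHp IHg d s nu S /sub_catP[subp subg] sd C E /=.
apply: (qeval_forall_impl_states (S := S)) => // nu' S' lv.
- by move/(prog_correct_relevel IHp subp sd E lv) => [].
- by move=> off A; apply/(prog_correct_relevel IHp subp sd E lv).
- exact: form_correct_relevel IHg subg lv.
Qed.

Lemma PAdd_correct i a : prog_correct (PAdd i a).
Proof. by move=> d s s' nu S S' _ _ _ C E E'; apply: (update_iff i a orbT orbF C E E'). Qed.

Lemma PRem_correct i a : prog_correct (PRem i a).
Proof.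
move=> d s s' nu S S' _ _ _ C E E'.
by apply: (update_iff (op := fun x e => x && ~~ e) i a andbF andbT C E E').
Qed.

Lemma PSeq_correct p1 p2 : prog_correct p1 -> prog_correct p2 -> prog_correct (PSeq p1 p2).
Proof.
move=> IH1 IH2 d s s' nu S S' /sub_catP[sub1 sub2] sd s'd C E E' /=.
have steps nu' S'' : relevel nu d nu' S'' ->
    (Defs.trans (in_SG Gamma) p1 S S'' <->
     same_off_atms S S'' /\ qeval nu' (trprog Gamma atms d.+1 s d p1)) /\
    (Defs.trans (in_SG Gamma) p2 S'' S' <->
     same_off_atms S'' S' /\ qeval nu' (trprog Gamma atms d.+1 d s' p2)).
  case=> C' E'' lift; split; first by apply: IH1 => //; [apply: ltnW | apply: lift].
  by apply: IH2 => //; [apply: ltnW | apply: lift].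
suff seq_iff : same_off_atms S S' ->
    ((exists S'', in_SG Gamma S'' /\
        Defs.trans (in_SG Gamma) p1 S S'' /\ Defs.trans (in_SG Gamma) p2 S'' S') <->
     qeval nu (QExistsL (Xs Gamma atms d)
                 (QAnd (trprog Gamma atms d.+1 s d p1) (trprog Gamma atms d.+1 d s' p2)))).
  split=> [H|[off /(seq_iff off)//]].
  have off : same_off_atms S S'.
    by case: H => S'' [_ [/trans_V_eq V1 /trans_V_eq V2]] q _; rewrite V2 V1.
  by split; last apply/(seq_iff off).
move=> off; apply: (qeval_exists_states (S := S)) => // nu' S'' /steps[step1 step2].
  by move=> [/step1[_ A1] /step2[_ A2]]; apply/andP.
move=> off'' /andP[/(conj off'')/step1 t1 A2]; split=> //.
by apply/step2; split=> // q qa; rewrite off // off''.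
Qed.

Lemma PUnion_correct p1 p2 : prog_correct p1 -> prog_correct p2 -> prog_correct (PUnion p1 p2).
Proof.
move=> IH1 IH2 d s s' nu S S' /sub_catP[sub1 sub2] sd s'd C E E'.
exact: iff_orb_frame (IH1 _ _ _ _ _ _ sub1 sd s'd C E E') (IH2 _ _ _ _ _ _ sub2 sd s'd C E E').
Qed.

Lemma PTest_correct g : form_correct g -> prog_correct (PTest g).
Proof.
move=> IH d s s' nu S S' sub sd s'd C E E' /=.
have Hg := IH d s nu S sub sd C E; have HB := eq_all_iff E E'; have HV := eq_prop_frame E E'.
split=> [[[/HV[off Hp] /HB Hb] /Hg Hs]|[off /and3P[/HB Hb Hp /Hg Hs]]].
  by split=> //; apply/and3P.
by split=> //; split=> //; apply/HV.
Qed.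

Lemma translation_correct : (forall f, form_correct f) /\ (forall p, prog_correct p).
Proof.
apply: form_prog_ind.
- by move=> a d s nu S sub _ _ E; apply: tr0_iff.
- by move=> g IH d s nu S sub sd C E; apply/iff_negb/IH.
- move=> g IHg h IHh d s nu S /sub_catP[subg subh] sd C E.
  by apply: iff_andb; [apply: IHg | apply: IHh].
- exact: FBox_correct.
- exact: FA_correct.
- exact: FR_correct.
- exact: FAreal_correct.
- exact: FRreal_correct.
- by move=> p IHp g IHg; apply: FProg_correct.
- exact: PAdd_correct.
- exact: PRem_correct.
- by move=> p1 IH1 p2 IH2; apply: PSeq_correct.
- by move=> p1 IH1 p2 IH2; apply: PUnion_correct.
- exact: PTest_correct.
Qed.

End Translation.

Theorem proposition3 (n : nat) (Gamma : 'I_n -> list (L0 n)) (phi0 : form n)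
    (S0 : state n) :
  in_SG Gamma S0 ->
  (sat (in_SG Gamma) S0 phi0 <-> qbf_true (translation Gamma phi0 S0)).
Proof.
move=> S0_in; set atms := atoms_of Gamma phi0.
have Gamma_atoms j a : a \in Gamma j -> {subset atoms0 a <= atms}.
  move=> aG x xa; rewrite mem_cat; apply/orP; left; apply/flattenP.
  exists (flatten [seq atoms0 a | a <- Gamma j]); first by apply/mapP; exists j; rewrite ?mem_enum.
  by apply/flattenP; exists (atoms0 a); rewrite ?map_f.
have phi0_atoms : {subset atoms_form phi0 <= atms} by move=> x xa; rewrite mem_cat xa orbT.
have C0 : vocab_clean Gamma (fun _ : qvar n => false) by [].
have [tr_correct _] := translation_correct Gamma_atoms.
rewrite /qbf_true /translation -/atms qeval_QExistsL; split=> [H|[nu E /andP[D Ht]]].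
  have [C E _] := relevel_set_level atms 0 C0 S0_in.
  exists (set_level Gamma atms (fun _ => false) 0 S0); first exact: set_level_eq_outside.
  by apply/andP; split; [apply/desc_iff | apply/(tr_correct phi0 1 0 _ S0)].
have E0 := (desc_iff _ _ _ S0_in).1 D; have [C _ _] := relevel_eq_outside C0 E E0.
exact/(tr_correct phi0 1 0 _ S0 phi0_atoms _ C E0).
Qed.
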